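(* For every online learning algorithm for the Dd-MDP problem, there exists a $T$-round Dd-MDP instance (with a finite policy collection) on which the algorithm's regret is $\Omega(T)$.
   Context: Dynamic deterministic MDP (Dd-MDP): finite state set $\mathcal S$, finite action set $\mathcal X$, feasible action sets $X_s\subseteq\mathcal X$ for $s\in\mathcal S$. The game lasts $T$ rounds from initial state $s_1$. In round $t$ the decision maker plays a (possibly randomized) $x_t\in X_{s_t}$; simultaneously an adversary chooses a transition function $g_t$ and a reward function $f_t$ (defined on pairs $(s,x)$ with $x\in X_s$, rewards in $[0,1]$). Then $s_{t+1}=g_t(s_t,x_t)$, the reward is $f_t(s_t,x_t)$, and $g_t,f_t$ are revealed. A policy is $\gamma:\mathcal S\to\mathcal X$ with $\gamma(s)\in X_s$; its simulation is $s^\gamma_1=s_1$, $x^\gamma_t=\gamma(s^\gamma_t)$, $s^\gamma_{t+1}=g_t(s^\gamma_t,x^\gamma_t)$. The regret w.r.t. a finite policy set $\Gamma$ is $\max_{\gamma\in\Gamma}\sum_t f_t(s^\gamma_t,x^\gamma_t)-\sum_t\mathbb{E}[f_t(s_t,x_t)]$. *)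

From HB Require Import structures.
From mathcomp Require Import all_boot all_order all_algebra.
From mathcomp Require Import reals.
Set Implicit Arguments. Unset Strict Implicit. Unset Printing Implicit Defensive.
Import Order.TTheory GRing.Theory Num.Theory.
Local Open Scope ring_scope.

Section DdMDP.
Variable R : realType.

(* One past round as seen by the learner: state s_t, action x_t played,
   revealed transition g_t and revealed reward f_t. *)
Definition step (S X : finType) : Type :=
  (S * X * (S -> X -> S) * (S -> X -> R))%type.

(* An online (randomized) learning algorithm for the Dd-MDP problem: for any
   finite state/action sets, it knows the static data of the problem
   (horizon T, feasible action sets X_s, initial state s_1, policy class Gamma),
   and maps the observed history and the current state to a distribution
   (probability vector) over actions. *)
Definition algorithm : Type :=
  forall (S X : finType), nat -> (S -> {set X}) -> S -> seq {ffun S -> X} ->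
    seq (step S X) -> S -> {ffun X -> R}.

Definition valid_algorithm (A : algorithm) : Prop :=
  forall (S X : finType) (T : nat) (feas : S -> {set X}) (s1 : S)
    (Gamma : seq {ffun S -> X}) (h : seq (step S X)) (s : S),
    (forall s', feas s' != set0) ->
    let p := A S X T feas s1 Gamma h s in
    [/\ forall x, 0 <= p x, \sum_x p x = 1 & forall x, p x != 0 -> x \in feas s].

(* Expected cumulative reward of the algorithm over the rounds t, ..., t+k-1
   (rounds indexed from 0), from history h and current state s, against the
   fixed sequences g_t (transitions) and f_t (rewards). *)
Fixpoint alg_value (A : algorithm) (S X : finType) (T : nat)
    (feas : S -> {set X}) (s1 : S) (Gamma : seq {ffun S -> X})
    (g : nat -> S -> X -> S) (f : nat -> S -> X -> R)
    (k t : nat) (h : seq (step S X)) (s : S) : R :=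
  match k with
  | 0 => 0
  | k'.+1 =>
      \sum_x A S X T feas s1 Gamma h s x *
        (f t s x + alg_value A T feas s1 Gamma g f k' t.+1
                      (rcons h (s, x, g t, f t)) (g t s x))
  end.

Definition alg_reward (A : algorithm) (S X : finType) (T : nat)
    (feas : S -> {set X}) (s1 : S) (Gamma : seq {ffun S -> X})
    (g : nat -> S -> X -> S) (f : nat -> S -> X -> R) : R :=
  alg_value A T feas s1 Gamma g f T 0 [::] s1.

Fixpoint policy_state (S X : finType) (s1 : S) (g : nat -> S -> X -> S)
    (gamma : S -> X) (t : nat) : S :=
  match t with
  | 0 => s1
  | t'.+1 => let s := policy_state s1 g gamma t' in g t' s (gamma s)
  end.

Definition policy_reward (S X : finType) (T : nat) (s1 : S)
    (g : nat -> S -> X -> S) (f : nat -> S -> X -> R) (gamma : {ffun S -> X}) : R :=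
  \sum_(t < T) let s := policy_state s1 g gamma t in f t s (gamma s).

Definition regret (A : algorithm) (S X : finType) (T : nat)
    (feas : S -> {set X}) (s1 : S) (Gamma : seq {ffun S -> X})
    (g : nat -> S -> X -> S) (f : nat -> S -> X -> R) : R :=
  match Gamma with
  | [::] => 0
  | gamma0 :: _ =>
      \big[Num.max/policy_reward T s1 g f gamma0]_(gamma <- Gamma)
         policy_reward T s1 g f gamma
      - alg_reward A T feas s1 Gamma g f
  end.

(* Well-formed T-round Dd-MDP instance: nonempty feasible sets, a nonempty finite
   class of feasible policies, rewards in [0,1]. (The transitions g_t are total
   functions; their values at infeasible pairs are irrelevant.) *)
Definition wf_instance (S X : finType) (feas : S -> {set X})
    (Gamma : seq {ffun S -> X}) (f : nat -> S -> X -> R) : Prop :=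
  [/\ forall s, feas s != set0,
      Gamma != [::],
      forall gamma, gamma \in Gamma -> forall s, gamma s \in feas s
    & forall t s x, 0 <= f t s x <= 1].

End DdMDP.

(* The adversary lets the first action choose one of two states and then
   freezes the state forever; from round 2 on, only one of the two states
   pays reward 1.  Knowing the algorithm, the adversary computes its
   first-round distribution and rewards the state it picks with probability
   at most 1/2.  The constant policy steering into that state earns T - 1,
   while the learner earns at most (T - 1)/2 in expectation. *)

From HB Require Import structures.
From mathcomp Require Import all_boot all_order all_algebra.
From mathcomp Require Import reals.
From mathcomp Require Import lra.
Set Implicit Arguments. Unset Strict Implicit. Unset Printing Implicit Defensive.
Import Order.TTheory GRing.Theory Num.Theory.
Local Open Scope ring_scope.

Section Regret.
Variables (R : realType) (A : algorithm R) (S X : finType) (T : nat).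
Variables (feas : S -> {set X}) (s1 : S) (Gamma : seq {ffun S -> X}).
Variables (g : nat -> S -> X -> S) (f : nat -> S -> X -> R).

Lemma policy_reward_sub_le_regret (gamma : {ffun S -> X}) : gamma \in Gamma ->
  policy_reward T s1 g f gamma - alg_reward A T feas s1 Gamma g f
    <= regret A T feas s1 Gamma g f.
Proof.
rewrite /regret; case: Gamma => [//|gamma0 Gamma'] gammaP.
rewrite lerD2r; exact: le_bigmax_seq.
Qed.

Section FrozenTail.
Variables (t0 : nat) (r : S -> R).
Hypothesis g_frozen : forall t s x, (t0 <= t)%N -> g t s x = s.
Hypothesis f_frozen : forall t s x, (t0 <= t)%N -> f t s x = r s.

Lemma alg_value_frozen k t h s :
  valid_algorithm A -> (forall s', feas s' != set0) -> (t0 <= t)%N ->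
  alg_value A T feas s1 Gamma g f k t h s = k%:R * r s.
Proof.
move=> validA feasN0; elim: k t h s => [|k IHk] t h s t0t /=; first by rewrite mul0r.
have [_ sum_p1 _] := validA S X T feas s1 Gamma h s feasN0.
under eq_bigr => x _ do rewrite IHk ?(leqW t0t) // g_frozen // f_frozen //.
by rewrite -mulr_suml sum_p1 mul1r -nat1r mulrDl mul1r.
Qed.

Lemma policy_state_frozen (gamma : S -> X) t :
  (t0 <= t)%N -> policy_state s1 g gamma t = policy_state s1 g gamma t0.
Proof.
elim: t => [|t IHt]; first by rewrite leqn0 => /eqP->.
rewrite leq_eqVlt => /predU1P[<-//|t0t] /=.
by rewrite g_frozen // IHt.
Qed.

End FrozenTail.
End Regret.

Lemma minority_le_half (R : realFieldType) (p : bool -> R) :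
  p true + p false = 1 -> p (~~ (1/2 < p true)) <= 1/2.
Proof. by case: ltP => /= p_true; lra. Qed.

Lemma quarter_succ_le_sub_half (R : realFieldType) (t q : R) :
  1 <= t -> q <= 1/2 -> 1/4 * (t + 1) <= t - t * q.
Proof. by move=> t_ge1 q_le; nra. Qed.

Section LockIn.
Variables (R : realType) (good : bool).

Definition lockin_transition (t : nat) (s x : bool) : bool :=
  if t is 0 then x else s.

Definition lockin_reward (t : nat) (s x : bool) : R :=
  if t is 0 then 0 else (s == good)%:R.

Lemma lockin_transition_frozen t s x : (1 <= t)%N -> lockin_transition t s x = s.
Proof. by case: t. Qed.

Lemma lockin_reward_frozen t s x : (1 <= t)%N -> lockin_reward t s x = (s == good)%:R.
Proof. by case: t. Qed.

Lemma policy_reward_lockin T (s1 b : bool) :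
  policy_reward T.+1 s1 lockin_transition lockin_reward [ffun=> b]
    = T%:R * (b == good)%:R.
Proof.
rewrite /policy_reward big_ord_recl add0r.
under eq_bigr => i _ do
  rewrite lift0 (policy_state_frozen s1 lockin_transition_frozen) //= ffunE.
by rewrite sumr_const card_ord mulr_natl.
Qed.

Lemma alg_reward_lockin (A : algorithm R) T feas (s1 : bool) Gamma :
  valid_algorithm A -> (forall s, feas s != set0) ->
  alg_reward A T.+1 feas s1 Gamma lockin_transition lockin_reward
    = T%:R * A bool bool T.+1 feas s1 Gamma [::] s1 good.
Proof.
move=> validA feasN0; rewrite /alg_reward /=.
under eq_bigr => x _ do
  rewrite (alg_value_frozen _ _ _ lockin_transition_frozen lockin_reward_frozen) //.
rewrite big_bool /=.
by case: good; rewrite /= !add0r !mulr0 !mulr1 ?addr0 ?add0r mulrC.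
Qed.

Lemma wf_lockin :
  wf_instance (fun _ : bool => [set: bool]) [:: [ffun=> false]; [ffun=> true]]
    lockin_reward.
Proof.
split=> [s|//|gamma _ s|[|t] s x]; rewrite ?in_setT //=.
- by apply/set0Pn; exists true; rewrite in_setT.
- by rewrite lexx ler01.
- by case: eqP; rewrite ?lexx ?ler01.
Qed.

End LockIn.

Theorem proposition1 (R : realType) (A : algorithm R) :
  valid_algorithm A ->
  exists c : R, 0 < c /\
  exists T0 : nat, forall T : nat, (T0 <= T)%N ->
    exists (S X : finType) (feas : S -> {set X}) (s1 : S)
           (Gamma : seq {ffun S -> X}) (g : nat -> S -> X -> S) (f : nat -> S -> X -> R),
      wf_instance feas Gamma f /\
      c * T%:R <= regret A T feas s1 Gamma g f.
Proof.
move=> validA; exists (1/4); split; first lra.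
exists 2%N => -[//|T] T_ge2.
pose feas := fun _ : bool => [set: bool].
pose Gamma : seq {ffun bool -> bool} := [:: [ffun=> false]; [ffun=> true]].
have [feasN0 _ _ _] := wf_lockin R false.
have [_ sum_p1 _] := validA bool bool T.+1 feas false Gamma [::] false feasN0.
set p := A bool bool T.+1 feas false Gamma [::] false in sum_p1.
pose good := ~~ (1/2 < p true).
have p_good_le : p good <= 1/2.
  by apply: minority_le_half; rewrite -big_bool.
exists bool, bool, feas, false, Gamma, lockin_transition, (lockin_reward R good).
split; first exact: wf_lockin.
have gammaP : [ffun=> good] \in Gamma by rewrite !inE; case: (good); rewrite eqxx ?orbT.
rewrite -[T.+1%:R]natr1; apply: le_trans (policy_reward_sub_le_regret _ _ _ _ _ _ gammaP).
rewrite policy_reward_lockin alg_reward_lockin // eqxx mulr1 -/p.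
by apply: quarter_succ_le_sub_half; rewrite ?ler1n.
Qed.
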